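(* Let $\mathbf C$ be an admissible category of coframes. Then $\mathbf{Adh}$ is a coreflective subcategory of $(\mathbf C^{\mathrm{adh}})^{op}$: the functor $\mathbb P:\mathbf{Adh}\to(\mathbf C^{\mathrm{adh}})^{op}$, $(X,\nu)\mapsto(\mathbb P(X),\nu)$, $f\mapsto f^{-1}$, has a right adjoint $\mathrm{pt}$ and the unit of this adjunction is an isomorphism.
   Context: A category of coframes has coframes as objects and coframe morphisms (preserving arbitrary infima and finite suprema); it is admissible if every powerset $\mathbb P(X)$ is an object and there are classes of index sets $\mathcal I,\mathcal J$ with morphisms exactly the monotone maps preserving existing $I$-indexed infima ($I\in\mathcal I$) and $J$-indexed suprema ($J\in\mathcal J$). Each coframe morphism $\varphi$ has a left adjoint $\varphi_!$. $\mathcal C_L$ is the set of complemented elements of $L$. An adherence structure on a coframe $L$ is a monotone map $\nu:L\to L$ preserving finite suprema of complemented elements and satisfying $\nu(\ell)=\bigwedge\{\nu(a):a\in\mathcal C_L,\ a\ge\ell\}$. An adherence $\mathbf C$-object is a $\mathbf C$-object with an adherence structure $\nu_L$; $\mathbf C^{\mathrm{adh}}$ has as morphisms the $\mathbf C$-morphisms $\varphi:L\to L'$ with $\nu_{L'}(\ell')\le\varphi(\nu_L(\varphi_!(\ell')))$ for all $\ell'\in L'$. An adherence space is a set $X$ with a Čech closure operator $\nu:\mathbb P(X)\to\mathbb P(X)$, i.e. $A\subseteq\nu(A)$ and $\nu$ preserves finite unions; $\mathbf{Adh}$ has as morphisms the maps $f$ with $f(\nu_X(A))\subseteq\nu_Y(f(A))$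 for all $A\subseteq X$. (The right adjoint sends an adherence $\mathbf C$-object $L$ to the set of join-prime elements $x$ of $L$ with $x\le\nu_L(x)$, equipped with the Čech closure $S\mapsto\{x: x\le\nu_L(\bigvee S)\}$.) *)

From Stdlib Require Import FunctionalExtensionality PropExtensionality Classical.

Unset Implicit Arguments.
Unset Strict Implicit.

Record coframe := Coframe {
  car :> Type;
  le : car -> car -> Prop;
  le_refl : forall x, le x x;
  le_trans : forall x y z, le x y -> le y z -> le x z;
  le_antisym : forall x y, le x y -> le y x -> x = y;
  inf : (car -> Prop) -> car;
  inf_lb : forall S x, S x -> le (inf S) x;
  inf_glb : forall S y, (forall x, S x -> le y x) -> le y (inf S);
  sup : (car -> Prop) -> car;
  sup_ub : forall S x, S x -> le x (sup S);
  sup_lub : forall S y, (forall x, S x -> le x y) -> le (sup S) y;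
  codistr : forall a S,
    sup (fun x => x = a \/ x = inf S)
    = inf (fun y => exists s, S s /\ y = sup (fun x => x = a \/ x = s))
}.

Arguments le {c}.
Arguments inf {c}.
Arguments sup {c}.

Definition join {L : coframe} (a b : L) : L := sup (fun x => x = a \/ x = b).
Definition meet {L : coframe} (a b : L) : L := inf (fun x => x = a \/ x = b).
Definition bot (L : coframe) : L := sup (fun _ => False).
Definition top (L : coframe) : L := inf (fun _ => False).

Definition infF {L : coframe} {I : Type} (f : I -> L) : L :=
  inf (fun x => exists i, x = f i).
Definition supF {L : coframe} {I : Type} (f : I -> L) : L :=
  sup (fun x => exists i, x = f i).

Definition complemented {L : coframe} (a : L) : Prop :=
  exists b : L, meet a b = bot L /\ join a b = top L.

Definition monotone {L L' : coframe} (phi : L -> L') : Prop :=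
  forall x y, le x y -> le (phi x) (phi y).

Definition coframe_mor {L L' : coframe} (phi : L -> L') : Prop :=
  (forall S : L -> Prop,
      phi (inf S) = inf (fun y => exists x, S x /\ y = phi x)) /\
  phi (bot L) = bot L' /\
  (forall a b, phi (join a b) = join (phi a) (phi b)).

(** The left adjoint phi_! of a coframe morphism phi. *)
Definition lower_adj {L L' : coframe} (phi : L -> L') (l' : L') : L :=
  inf (fun l => le l' (phi l)).

Section Powerset.
Variable X : Type.

Let pset := X -> Prop.
Let ple (A B : pset) : Prop := forall x, A x -> B x.
Let pinf (S : pset -> Prop) : pset := fun x => forall A, S A -> A x.
Let psup (S : pset -> Prop) : pset := fun x => exists A, S A /\ A x.

Let pext (A B : pset) : (forall x, A x <-> B x) -> A = B.
Proof.
  intro H; apply functional_extensionality; intro x;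
  apply propositional_extensionality; apply H.
Qed.

Let ple_refl : forall A, ple A A. Proof. intros A x H; exact H. Qed.
Let ple_trans : forall A B C, ple A B -> ple B C -> ple A C.
Proof. intros A B C H1 H2 x H; apply H2, H1, H. Qed.
Let ple_antisym : forall A B, ple A B -> ple B A -> A = B.
Proof. intros A B H1 H2; apply pext; intro x; split; [apply H1|apply H2]. Qed.
Let pinf_lb : forall S A, S A -> ple (pinf S) A.
Proof. intros S A HA x Hx; apply Hx, HA. Qed.
Let pinf_glb : forall S B, (forall A, S A -> ple B A) -> ple B (pinf S).
Proof. intros S B H x Hx A HA; apply (H A HA x Hx). Qed.
Let psup_ub : forall S A, S A -> ple A (psup S).
Proof. intros S A HA x Hx; exists A; split; assumption. Qed.
Let psup_lub : forall S B, (forall A, S A -> ple A B) -> ple (psup S) B.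
Proof. intros S B H x [A [HA Hx]]; apply (H A HA x Hx). Qed.

Let pcodistr : forall a S,
    psup (fun x => x = a \/ x = pinf S)
    = pinf (fun y => exists s, S s /\ y = psup (fun x => x = a \/ x = s)).
Proof.
  intros a S; apply pext; intro x; split.
  - intros [A [[-> | ->] Hx]] B [s [Hs ->]].
    + exists a; split; [left; reflexivity | exact Hx].
    + exists s; split; [right; reflexivity | apply Hx, Hs].
  - intro H.
    destruct (classic (a x)) as [Ha | Ha].
    + exists a; split; [left; reflexivity | exact Ha].
    + exists (pinf S); split; [right; reflexivity |].
      intros s Hs.
      destruct (H _ (ex_intro _ s (conj Hs eq_refl))) as [B [[-> | ->] HB]].
      * contradiction.
      * exact HB.
Qed.

Definition powerset : coframe :=
  @Coframe pset ple ple_refl ple_trans ple_antisym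
    pinf pinf_lb pinf_glb psup psup_ub psup_lub pcodistr.

End Powerset.

(** A category of coframes is given by its class of objects [Obj]; it is
    admissible w.r.t. classes of index sets [Iset], [Jset] when every powerset
    is an object and the morphisms are exactly the monotone maps preserving
    I-indexed infima (I in Iset) and J-indexed suprema (J in Jset); these
    morphisms are required to be coframe morphisms. *)
Definition Cmor (Iset Jset : Type -> Prop) {L L' : coframe} (phi : L -> L')
  : Prop :=
  monotone phi /\
  (forall I : Type, Iset I -> forall f : I -> L,
      phi (infF f) = infF (fun i => phi (f i))) /\
  (forall J : Type, Jset J -> forall f : J -> L,
      phi (supF f) = supF (fun j => phi (f j))).

Definition admissible (Iset Jset : Type -> Prop) (Obj : coframe -> Prop)
  : Prop :=
  (forall X : Type, Obj (powerset X)) /\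
  (forall (L L' : coframe) (phi : L -> L'),
      Obj L -> Obj L' -> Cmor Iset Jset phi -> coframe_mor phi).

Definition adherence_structure (L : coframe) (nu : L -> L) : Prop :=
  monotone nu /\
  nu (bot L) = bot L /\
  (forall a b, complemented a -> complemented b ->
      nu (join a b) = join (nu a) (nu b)) /\
  (forall l, nu l = inf (fun y => exists a, complemented a /\ le l a /\ y = nu a)).

Definition adhC_obj (Obj : coframe -> Prop) (L : coframe) (nu : L -> L) : Prop :=
  Obj L /\ adherence_structure L nu.

Definition Cadh_mor (Iset Jset : Type -> Prop)
  {L : coframe} (nuL : L -> L) {L' : coframe} (nuL' : L' -> L')
  (phi : L -> L') : Prop :=
  Cmor Iset Jset phi /\
  (forall l' : L', le (nuL' l') (phi (nuL (lower_adj phi l')))).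

(** * Adherence spaces: sets with a Cech closure operator. *)
Record adh_space := AdhSpace {
  pts : Type;
  cl : (pts -> Prop) -> (pts -> Prop);
  cl_extensive : forall (A : pts -> Prop) x, A x -> cl A x;
  cl_empty : forall x, ~ cl (fun _ => False) x;
  cl_union : forall (A B : pts -> Prop) x,
      cl (fun y => A y \/ B y) x <-> (cl A x \/ cl B x)
}.

Definition image {X Y : Type} (f : X -> Y) (A : X -> Prop) : Y -> Prop :=
  fun y => exists x, A x /\ y = f x.

Definition preimage {X Y : Type} (f : X -> Y) (B : Y -> Prop) : X -> Prop :=
  fun x => B (f x).

Definition adh_mor (X Y : adh_space) (f : pts X -> pts Y) : Prop :=
  forall (A : pts X -> Prop) x, cl X A x -> cl Y (image f A) (f x).

Definition adh_iso (X Y : adh_space) (f : pts X -> pts Y) : Prop :=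
  adh_mor X Y f /\
  exists g : pts Y -> pts X, adh_mor Y X g /\
    (forall x, g (f x) = x) /\ (forall y, f (g y) = y).

From Stdlib Require Import FunctionalExtensionality PropExtensionality Classical
  ProofIrrelevance ClassicalEpsilon.

(* A point of an adherence C-object (L, nu) is a C-morphism p : L -> P(1) = 2
   whose core x_p = inf {l | p l} (a join-prime element of L) satisfies
   p (nu x_p), i.e. x_p <= nu x_p.  Let e(l) = {q | q contains l}; the closure
   of a set S of points is e (nu (e_! S)), where e_! S is the join of the cores
   of the points of S.  Then e satisfies the adherence condition with equality,
   a C^adh-morphism phi : L -> P(X) factors as P(g) o e exactly through
   g x = {l | x in phi l}, and since phi_! A = e_! (g A) the adherence condition
   on phi is precisely the continuity of g.  The closure preserves unions
   because nu preserves all binary joins: every element is a meet of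
   complemented ones and finite joins distribute over meets.  Finally every
   point of P(X) is principal, so the unit X -> pt(P X) is bijective. *)

Section PowersetFacts.
Variable X : Type.
Implicit Types A B : powerset X.

Lemma powerset_ext A B : (forall x, A x <-> B x) -> A = B.
Proof.
  intro H; apply functional_extensionality; intro x.
  apply propositional_extensionality, H.
Qed.

Lemma powerset_join A B : join A B = (fun x => A x \/ B x).
Proof.
  apply powerset_ext; intro x; split.
  - intros [C [[-> | ->] HC]]; auto.
  - intros [H | H]; [exists A | exists B]; auto.
Qed.

Lemma powerset_meet A B : meet A B = (fun x => A x /\ B x).
Proof.
  apply powerset_ext; intro x; split.
  - intro H; split; apply H; auto.
  - intros [HA HB] C [-> | ->]; assumption.
Qed.

Lemma powerset_bot : bot (powerset X) = (fun _ => False).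
Proof. apply powerset_ext; intro x; split; [intros [C [[] _]] | intros []]. Qed.

Lemma powerset_top : top (powerset X) = (fun _ => True).
Proof. apply powerset_ext; intro x; split; [auto | intros _ C []]. Qed.

Lemma powerset_infF I (f : I -> powerset X) : infF f = (fun x => forall i, f i x).
Proof.
  apply powerset_ext; intro x; split.
  - intros H i; apply H; exists i; reflexivity.
  - intros H C [i ->]; apply H.
Qed.

Lemma powerset_supF I (f : I -> powerset X) : supF f = (fun x => exists i, f i x).
Proof.
  apply powerset_ext; intro x; split.
  - intros [C [[i ->] H]]; exists i; exact H.
  - intros [i H]; exists (f i); split; [exists i; reflexivity | exact H].
Qed.

End PowersetFacts.

Lemma Cmor_preimage (Iset Jset : Type -> Prop) {X Y : Type} (f : X -> Y) :
  @Cmor Iset Jset (powerset Y) (powerset X) (preimage f).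
Proof.
  split; [| split].
  - intros A B H x; apply H.
  - intros I _ g; rewrite !powerset_infF; reflexivity.
  - intros J _ g; rewrite !powerset_supF; reflexivity.
Qed.

Lemma Cmor_comp (Iset Jset : Type -> Prop) {L M N : coframe}
  (phi : L -> M) (psi : M -> N) :
  Cmor Iset Jset phi -> Cmor Iset Jset psi -> Cmor Iset Jset (fun l => psi (phi l)).
Proof.
  intros [phi_mono [phi_inf phi_sup]] [psi_mono [psi_inf psi_sup]].
  split; [| split].
  - intros l m H; apply psi_mono, phi_mono, H.
  - intros I HI f; rewrite phi_inf, psi_inf by exact HI; reflexivity.
  - intros J HJ f; rewrite phi_sup, psi_sup by exact HJ; reflexivity.
Qed.

Lemma lower_adj_preimage {L : coframe} {X Y : Type}
  (e : L -> powerset Y) (g : X -> Y) (A : powerset X) :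
  @lower_adj L (powerset X) (fun l => preimage g (e l)) A = lower_adj e (image g A).
Proof.
  unfold lower_adj; f_equal.
  apply functional_extensionality; intro l; apply propositional_extensionality.
  split.
  - intros H y [x [Hx ->]]; apply H, Hx.
  - intros H x Hx; apply H; exists x; auto.
Qed.

Lemma cl_mono (X : adh_space) (A B : pts X -> Prop) x :
  (forall y, A y -> B y) -> cl X A x -> cl X B x.
Proof.
  intros HAB HA.
  replace B with (fun y => A y \/ B y).
  - apply cl_union; auto.
  - apply powerset_ext; intro y; split; [intros [H | H] |]; auto.
Qed.

Section CoframeFacts.
Variable L : coframe.
Implicit Types a b c l m y : L.

Lemma le_join_l a b : le a (join a b).
Proof. apply sup_ub; left; reflexivity. Qed.

Lemma le_join_r a b : le b (join a b).
Proof. apply sup_ub; right; reflexivity. Qed.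

Lemma join_le a b c : le a c -> le b c -> le (join a b) c.
Proof. intros. apply sup_lub; intros x [-> | ->]; assumption. Qed.

Lemma meet_le_l a b : le (meet a b) a.
Proof. apply inf_lb; left; reflexivity. Qed.

Lemma meet_le_r a b : le (meet a b) b.
Proof. apply inf_lb; right; reflexivity. Qed.

Lemma le_meet a b c : le c a -> le c b -> le c (meet a b).
Proof. intros. apply inf_glb; intros x [-> | ->]; assumption. Qed.

Lemma join_comm a b : join a b = join b a.
Proof. apply le_antisym; apply join_le; apply le_join_l || apply le_join_r. Qed.

Lemma bot_le l : le (bot L) l.
Proof. apply sup_lub; intros _ []. Qed.

Lemma le_top l : le l (top L).
Proof. apply inf_glb; intros _ []. Qed.

Lemma le_inf_subset (S T : L -> Prop) :
  (forall x, S x -> T x) -> le (inf T) (inf S).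
Proof. intro H; apply inf_glb; intros x Hx; apply inf_lb, H, Hx. Qed.

Lemma le_join_inf a (S : L -> Prop) y :
  (forall s, S s -> le y (join a s)) -> le y (join a (inf S)).
Proof.
  intro H; unfold join; rewrite codistr.
  apply inf_glb; intros x [s [Hs ->]]; apply H, Hs.
Qed.

Lemma le_of_le_join_disjoint a a' b y :
  meet a a' = bot L -> le y (join b a) -> le y a' -> le y b.
Proof.
  intros Hdisj Hyba Hya'.
  assert (Hy : le y (join b (meet a a'))).
  { apply le_join_inf; intros s [-> | ->]; [exact Hyba |].
    apply (le_trans _ _ _ _ Hya'), le_join_r. }
  rewrite Hdisj in Hy.
  apply (le_trans _ _ _ _ Hy), join_le; [apply le_refl | apply bot_le].
Qed.

Lemma complemented_join a b :
  complemented a -> complemented b -> complemented (join a b).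
Proof.
  intros [a' [Ha_meet Ha_join]] [b' [Hb_meet Hb_join]].
  exists (meet a' b'); split.
  - apply le_antisym; [| apply bot_le].
    set (x := meet (join a b) (meet a' b')).
    assert (Hxa' : le x a') by apply (le_trans _ _ _ _ (meet_le_r _ _)), meet_le_l.
    assert (Hxb' : le x b') by apply (le_trans _ _ _ _ (meet_le_r _ _)), meet_le_r.
    assert (Hxb : le x b).
    { apply (le_of_le_join_disjoint a a'); [exact Ha_meet | | exact Hxa'].
      rewrite join_comm; apply meet_le_l. }
    rewrite <- Hb_meet; apply le_meet; assumption.
  - apply le_antisym; [apply le_top |].
    apply le_join_inf; intros s [-> | ->].
    + rewrite <- Ha_join; apply join_le.
      * apply (le_trans _ _ _ _ (le_join_l a b)), le_join_l.
      * apply le_join_r.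
    + rewrite <- Hb_join; apply join_le.
      * apply (le_trans _ _ _ _ (le_join_r a b)), le_join_l.
      * apply le_join_r.
Qed.

Lemma adherence_join (nu : L -> L) l m :
  adherence_structure L nu -> nu (join l m) = join (nu l) (nu m).
Proof.
  intros [nu_mono [_ [nu_join_compl nu_inf]]].
  apply le_antisym.
  2: apply join_le; apply nu_mono; apply le_join_l || apply le_join_r.
  rewrite (nu_inf l), (nu_inf m).
  apply le_join_inf; intros s [b [Hb [Hmb ->]]].
  rewrite (join_comm (inf _) (nu b)); apply le_join_inf; intros s [a [Ha [Hla ->]]].
  rewrite (join_comm (nu b) (nu a)), <- nu_join_compl by assumption.
  rewrite (nu_inf (join l m)); apply inf_lb.
  exists (join a b); split; [apply complemented_join; assumption |].
  split; [| reflexivity].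
  apply join_le.
  - apply (le_trans _ _ _ _ Hla), le_join_l.
  - apply (le_trans _ _ _ _ Hmb), le_join_r.
Qed.

End CoframeFacts.

Lemma cl_adherence_structure (X : adh_space) :
  adherence_structure (powerset (pts X)) (cl X).
Proof.
  split; [| split; [| split]].
  - intros A B H x; apply cl_mono, H.
  - rewrite powerset_bot; apply powerset_ext; intro x.
    split; [apply cl_empty | intros []].
  - intros A B _ _; rewrite !powerset_join; apply powerset_ext; intro x.
    apply cl_union.
  - intro A; apply le_antisym.
    + apply inf_glb; intros y [B [_ [HAB ->]]] x; apply cl_mono, HAB.
    + apply inf_lb; exists A; split; [| split; [apply le_refl | reflexivity]].
      exists (fun x => ~ A x).
      rewrite powerset_meet, powerset_bot, powerset_join, powerset_top.
      split; apply powerset_ext; intro x; split; try tauto; intros _; apply classic.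
Qed.

Section Spectrum.
Variables (Iset Jset : Type -> Prop) (Obj : coframe -> Prop).
Hypothesis Hadm : admissible Iset Jset Obj.

Section Points.
Context {L : coframe} {nu : L -> L}.

(* Asking every point to witness [adhC_obj] makes pt(L, nu) empty, hence
   trivially an adherence space, when (L, nu) is not an adherence C-object. *)
Definition is_point (p : L -> powerset unit) : Prop :=
  adhC_obj Obj L nu /\ Cmor Iset Jset p /\ p (nu (inf (fun l => p l tt))) tt.

Record point := Point { pt_map : L -> powerset unit; pt_spec : is_point pt_map }.

Definition pt_in (q : point) (l : L) : Prop := pt_map q l tt.

Definition counit (l : L) : powerset point := fun q => pt_in q l.

Definition pt_closure (S : powerset point) : powerset point :=
  counit (nu (lower_adj counit S)).

Lemma point_ext (q1 q2 : point) : (forall l, pt_in q1 l <-> pt_in q2 l) -> q1 = q2.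
Proof.
  destruct q1 as [p1 h1], q2 as [p2 h2]; unfold pt_in; simpl; intro H.
  assert (p1 = p2) as <-.
  { apply functional_extensionality; intro l.
    apply powerset_ext; intros []; apply H. }
  f_equal; apply proof_irrelevance.
Qed.

Lemma point_Cmor (q : point) : Cmor Iset Jset (pt_map q).
Proof. exact (proj1 (proj2 (pt_spec q))). Qed.

Lemma point_adherence (q : point) : adherence_structure L nu.
Proof. exact (proj2 (proj1 (pt_spec q))). Qed.

Lemma point_coframe_mor (q : point) : coframe_mor (pt_map q).
Proof.
  apply (proj2 Hadm); [exact (proj1 (proj1 (pt_spec q))) | apply (proj1 Hadm) |].
  apply point_Cmor.
Qed.

Lemma pt_in_core (q : point) : pt_in q (nu (inf (pt_in q))).
Proof. exact (proj2 (proj2 (pt_spec q))). Qed.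

Lemma pt_in_mono (q : point) l m : le l m -> pt_in q l -> pt_in q m.
Proof. intro H; apply (proj1 (point_Cmor q) _ _ H). Qed.

Lemma pt_in_inf (q : point) (S : L -> Prop) :
  pt_in q (inf S) <-> forall l, S l -> pt_in q l.
Proof.
  unfold pt_in; rewrite (proj1 (point_coframe_mor q)); split.
  - intros H l Hl; apply H; exists l; auto.
  - intros H A [l [Hl ->]]; apply H, Hl.
Qed.

Lemma pt_in_join (q : point) l m : pt_in q (join l m) <-> pt_in q l \/ pt_in q m.
Proof.
  unfold pt_in; rewrite (proj2 (proj2 (point_coframe_mor q))), powerset_join.
  reflexivity.
Qed.

Lemma pt_notin_bot (q : point) : ~ pt_in q (bot L).
Proof.
  unfold pt_in; rewrite (proj1 (proj2 (point_coframe_mor q))), powerset_bot.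
  auto.
Qed.

Lemma pt_closure_extensive (S : powerset point) q : S q -> pt_closure S q.
Proof.
  intro Hq; apply (pt_in_mono q (nu (inf (pt_in q)))); [| apply pt_in_core].
  apply (proj1 (point_adherence q)), le_inf_subset; intros l Hl; apply Hl, Hq.
Qed.

Lemma pt_closure_empty q : ~ pt_closure (fun _ => False) q.
Proof.
  intro H; apply (pt_notin_bot q).
  rewrite <- (proj1 (proj2 (point_adherence q))).
  eapply pt_in_mono; [| exact H].
  apply (proj1 (point_adherence q)), inf_lb; intros _ [].
Qed.

Lemma pt_closure_union (A B : powerset point) q :
  pt_closure (fun y => A y \/ B y) q <-> pt_closure A q \/ pt_closure B q.
Proof.
  pose proof (point_adherence q) as Hnu.
  unfold pt_closure, counit; rewrite <- pt_in_join, <- adherence_join by exact Hnu.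
  split; apply pt_in_mono, (proj1 Hnu).
  - apply inf_lb; intros q' [Hq' | Hq'].
    + apply (pt_in_mono q' _ _ (le_join_l _ _ _)), pt_in_inf.
      intros l Hl; apply Hl, Hq'.
    + apply (pt_in_mono q' _ _ (le_join_r _ _ _)), pt_in_inf.
      intros l Hl; apply Hl, Hq'.
  - apply join_le; apply le_inf_subset; intros l Hl q' Hq'; apply Hl; auto.
Qed.

Definition pt_space : adh_space :=
  AdhSpace point pt_closure pt_closure_extensive pt_closure_empty pt_closure_union.

Lemma counit_Cadh_mor :
  @Cadh_mor Iset Jset L nu (powerset (pts pt_space)) (cl pt_space) counit.
Proof.
  split; [split; [| split] |].
  - intros l m H q; apply pt_in_mono, H.
  - intros I HI f; rewrite powerset_infF; apply powerset_ext; intro q.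
    unfold counit, pt_in; rewrite (proj1 (proj2 (point_Cmor q)) I HI f), powerset_infF.
    reflexivity.
  - intros J HJ f; rewrite powerset_supF; apply powerset_ext; intro q.
    unfold counit, pt_in; rewrite (proj2 (proj2 (point_Cmor q)) J HJ f), powerset_supF.
    reflexivity.
  - intros S q H; exact H.
Qed.

Lemma preimage_counit_inj {Y : Type} (g1 g2 : Y -> point) :
  (forall l, preimage g1 (counit l) = preimage g2 (counit l)) -> forall y, g1 y = g2 y.
Proof.
  intros H y; apply point_ext; intro l.
  change (preimage g1 (counit l) y <-> preimage g2 (counit l) y).
  rewrite H; reflexivity.
Qed.

Section Factorization.
Variables (X : adh_space) (phi : L -> powerset (pts X)).
Hypotheses (Hobj : adhC_obj Obj L nu)
  (Hphi : @Cadh_mor Iset Jset L nu (powerset (pts X)) (cl X) phi).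

Lemma is_point_eval (x : pts X) : is_point (fun l => preimage (fun _ : unit => x) (phi l)).
Proof.
  destruct Hphi as [phi_Cmor phi_adh].
  split; [exact Hobj | split].
  - exact (Cmor_comp _ _ _ _ phi_Cmor (Cmor_preimage _ _ _)).
  - apply (proj1 phi_Cmor (nu (lower_adj phi (fun y => y = x)))).
    + apply (proj1 (proj2 Hobj)), le_inf_subset; intros l Hl y ->; exact Hl.
    + apply phi_adh, cl_extensive; reflexivity.
Qed.

Definition eval_point (x : pts X) : point := Point _ (is_point_eval x).

Lemma eval_point_adh_mor : adh_mor X pt_space eval_point.
Proof.
  intros A x HA.
  assert (E : lower_adj counit (image eval_point A) = lower_adj phi A)
    by exact (eq_sym (lower_adj_preimage counit eval_point A)).
  change (phi (nu (lower_adj counit (image eval_point A))) x); rewrite E.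
  apply (proj2 Hphi), HA.
Qed.

End Factorization.
End Points.

Arguments point : clear implicits.
Arguments pt_space : clear implicits.

Section Unit.
Variable X : adh_space.

Local Notation PX := (powerset (pts X)).

Lemma powerset_adhC_obj : adhC_obj Obj PX (cl X).
Proof. split; [apply (proj1 Hadm) | apply cl_adherence_structure]. Qed.

Lemma id_Cadh_mor : @Cadh_mor Iset Jset PX (cl X) PX (cl X) (fun A => A).
Proof.
  split; [split; [| split] |].
  - intros A B H; exact H.
  - reflexivity.
  - reflexivity.
  - intros A x H; apply (cl_mono X _ _ _ (fun y Hy B HB => HB y Hy) H).
Qed.

Definition pt_unit : pts X -> pts (pt_space PX (cl X)) :=
  eval_point X (fun A => A) powerset_adhC_obj id_Cadh_mor.

Lemma pt_unit_adh_mor : adh_mor X (pt_space PX (cl X)) pt_unit.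
Proof. apply eval_point_adh_mor. Qed.

(* A point q contains its core; any x in the core splits it into {x} and the
   rest, and q cannot contain the rest, so q is the principal filter of x. *)
Lemma powerset_point_principal (q : point PX (cl X)) :
  exists x, forall A, pt_in q A <-> A x.
Proof.
  set (core := inf (pt_in q) : PX).
  assert (Hcore : pt_in q core) by (apply pt_in_inf; auto).
  assert (Hx : exists x, core x).
  { apply NNPP; intro Hempty; apply (pt_notin_bot q).
    apply (pt_in_mono q core); [| exact Hcore].
    intros z Hz; destruct (Hempty (ex_intro _ z Hz)). }
  destruct Hx as [x Hx]; exists x; intro A; split; [apply Hx |].
  intro HA.
  assert (Hsplit : pt_in q (@join PX (fun z => z = x) (fun z => core z /\ z <> x))).
  { apply (pt_in_mono q core); [| exact Hcore].
    rewrite powerset_join; intros z Hz; destruct (classic (z = x)); auto. }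
  apply pt_in_join in Hsplit as [Hsingle | Hrest].
  - apply (pt_in_mono q _ _ (fun z Hz => eq_ind_r A HA Hz) Hsingle).
  - destruct (Hx _ Hrest) as [_ []]; reflexivity.
Qed.

Lemma pt_unit_adh_iso : adh_iso X (pt_space PX (cl X)) pt_unit.
Proof.
  split; [exact pt_unit_adh_mor |].
  destruct (choice _ powerset_point_principal) as [pt_unit_inv Hinv].
  exists pt_unit_inv; split; [| split].
  - intros S q Hq; apply Hinv in Hq.
    apply (cl_mono X _ (image pt_unit_inv S)) in Hq; [exact Hq |].
    intros z Hz; apply Hz; intros q' Hq'; apply Hinv; exists q'; auto.
  - intro x; exact (proj1 (Hinv (pt_unit x) (fun z => z = x)) eq_refl).
  - intro q; apply point_ext; intro A; symmetry; apply Hinv.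
Qed.

End Unit.
End Spectrum.

Theorem mainTheorem11 (Iset Jset : Type -> Prop) (Obj : coframe -> Prop)
  (Hadm : admissible Iset Jset Obj) :
  exists (pt : forall L : coframe, (L -> L) -> adh_space)
         (e : forall (L : coframe) (nu : L -> L), L -> powerset (pts (pt L nu))),
    (* the counit is a C^adh-morphism *)
    (forall (L : coframe) (nu : L -> L), adhC_obj Obj L nu ->
       @Cadh_mor Iset Jset L nu (powerset (pts (pt L nu))) (cl (pt L nu)) (e L nu)) /\
    (* universal property: Hom_{(C^adh)^op}(P X, L) ~ Hom_Adh(X, pt L) *)
    (forall (L : coframe) (nu : L -> L), adhC_obj Obj L nu ->
     forall (X : adh_space) (phi : L -> powerset (pts X)),
       @Cadh_mor Iset Jset L nu (powerset (pts X)) (cl X) phi ->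
       (exists g : pts X -> pts (pt L nu),
           adh_mor X (pt L nu) g /\
           forall l, phi l = preimage g (e L nu l)) /\
       (forall g1 g2 : pts X -> pts (pt L nu),
           adh_mor X (pt L nu) g1 -> adh_mor X (pt L nu) g2 ->
           (forall l, phi l = preimage g1 (e L nu l)) ->
           (forall l, phi l = preimage g2 (e L nu l)) ->
           forall x, g1 x = g2 x)) /\
    (* the unit is an isomorphism *)
    (forall X : adh_space,
       exists eta : pts X -> pts (pt (powerset (pts X)) (cl X)),
         adh_mor X _ eta /\
         (forall A : powerset (pts X),
             A = preimage eta (e (powerset (pts X)) (cl X) A)) /\
         adh_iso X _ eta).
Proof.
  exists (@pt_space Iset Jset Obj Hadm), (@counit Iset Jset Obj).
  split; [| split].
  - intros L nu _; apply counit_Cadh_mor.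
  - intros L nu Hobj X phi Hphi; split.
    + exists (eval_point Iset Jset Obj X phi Hobj Hphi).
      split; [apply eval_point_adh_mor | reflexivity].
    + intros g1 g2 _ _ H1 H2; apply preimage_counit_inj.
      intro l; rewrite <- H1, <- H2; reflexivity.
  - intro X; exists (pt_unit Iset Jset Obj Hadm X).
    split; [apply pt_unit_adh_mor | split; [reflexivity | apply pt_unit_adh_iso]].
Qed.
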